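(* Let $V$ be a real Hilbert space, let $W\subset V$ be a subspace of finite dimension $m$, and let $P_W$ denote the orthogonal projection onto $W$. A map $A:W\to V$ has the form $A(w)=w+B(w)$ for all $w\in W$, with $B:W\to W^\perp$ affine, if and only if there exist $\bar u\in V$ and a linear subspace $V_n\subset V$ of dimension $n\le m$ with $V_n\cap W^\perp=\{0\}$ such that $A$ coincides with the affine PBDW algorithm for $\bar u+V_n$, namely $$A(w)=\operatorname{argmin}\{\operatorname{dist}(v,\bar u+V_n)\;:\; v\in w+W^\perp\}\quad\text{for all } w\in W.$$
   Context: $W^\perp$ is the orthogonal complement of $W$ in $V$, and $\operatorname{dist}(v,S)=\inf_{s\in S}\|v-s\|$. The condition $V_n\cap W^\perp=\{0\}$ guarantees that the minimizer in the definition of the affine PBDW algorithm exists and is unique. *)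

From HB Require Import structures.
From mathcomp Require Import all_boot all_order all_algebra.
From mathcomp Require Import boolp classical_sets reals.
Set Implicit Arguments. Unset Strict Implicit. Unset Printing Implicit Defensive.
Import Order.TTheory GRing.Theory Num.Theory.
Local Open Scope ring_scope.
Local Open Scope classical_set_scope.

Section Hilbert.
Variables (R : realType) (V : lmodType R) (ip : V -> V -> R).

Definition ipnorm (v : V) : R := Num.sqrt (ip v v).

Record is_hilbert : Prop := {
  ip_sym : forall u v, ip u v = ip v u;
  ip_linl : forall (a : R) u v w, ip (a *: u + v) w = a * ip u w + ip v w;
  ip_pos : forall v, v != 0 -> 0 < ip v v;
  ip_complete : forall u : nat -> V,
    (forall e : R, 0 < e -> exists N : nat, forall p q : nat,
        (N <= p)%N -> (N <= q)%N -> ipnorm (u p - u q) < e) ->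
    exists l : V, forall e : R, 0 < e -> exists N : nat, forall p : nat,
        (N <= p)%N -> ipnorm (u p - l) < e
}.

Definition subspace_of_dim (S : set V) (n : nat) : Prop :=
  exists b : 'I_n -> V,
    (forall c : 'I_n -> R, \sum_(i < n) c i *: b i = 0 -> forall i, c i = 0) /\
    S = [set v | exists c : 'I_n -> R, v = \sum_(i < n) c i *: b i].

Definition orth (W : set V) : set V := [set v | forall w, W w -> ip v w = 0].

Definition dist (v : V) (S : set V) : R := inf [set ipnorm (v - s) | s in S].

Definition translate (u : V) (S : set V) : set V := [set u + s | s in S].

Definition affine_on (W : set V) (B : V -> V) : Prop :=
  forall (t : R) x y, W x -> W y ->
    B (t *: x + (1 - t) *: y) = t *: B x + (1 - t) *: B y.

Definition is_argmin (f : V -> R) (S : set V) (x : V) : Prop :=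
  S x /\ (forall v, S v -> f x <= f v) /\
  (forall y, S y -> (forall v, S v -> f y <= f v) -> y = x).

End Hilbert.

From HB Require Import structures.
From mathcomp Require Import all_boot all_order all_algebra.
From mathcomp Require Import boolp classical_sets reals.
Import Order.TTheory GRing.Theory Num.Theory.
Set Implicit Arguments. Unset Strict Implicit. Unset Printing Implicit Defensive.
Local Open Scope ring_scope.
Local Open Scope classical_set_scope.

(* If A w = w + B w with B affine into W^perp, then
   L := B - B 0 is linear on W and Vn := {w + L w | w in W} has dimension m
   and meets W^perp only in 0. The point w + B w = B 0 + (w + L w) lies in
   B 0 + Vn, so it has distance 0; any other point of w + W^perp at distance 0
   lies in B 0 + Vn (finite-dimensional subspaces are closed), and comparing
   W-components shows it is w + B w.
   Conversely, Vn meeting W^perp trivially makes P_W injective on Vn. For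
   v = w + p with p in W^perp and t = ubar + s with s in Vn, Pythagoras gives
   ||v - t|| >= ||(w - P_W ubar) - P_W s||, and this lower bound is attained by
   taking for s the lift of the best approximation of w - P_W ubar in P_W Vn and
   p := P_W^perp (ubar + s). This p is an affine function of w. *)

Section InnerProduct.
Variables (R : realType) (V : lmodType R) (ip : V -> V -> R).
Hypothesis hV : is_hilbert ip.

Lemma ipDl u v w : ip (u + v) w = ip u w + ip v w.
Proof. by rewrite -[u in LHS]scale1r (ip_linl hV) mul1r. Qed.

Lemma ip0l w : ip 0 w = 0.
Proof. by apply: (@addrI _ (ip 0 w)); rewrite -ipDl !addr0. Qed.

Lemma ipZl a u w : ip (a *: u) w = a * ip u w.
Proof. by rewrite -[a *: u]addr0 (ip_linl hV) ip0l addr0. Qed.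

Lemma ipBl u v w : ip (u - v) w = ip u w - ip v w.
Proof. by rewrite ipDl -scaleN1r ipZl mulN1r. Qed.

Lemma ipDr u v w : ip w (u + v) = ip w u + ip w v.
Proof. by rewrite !(ip_sym hV w) ipDl. Qed.

Lemma ip_suml n (c : 'I_n -> R) (b : 'I_n -> V) w :
  ip (\sum_(i < n) c i *: b i) w = \sum_(i < n) c i * ip (b i) w.
Proof.
elim: n c b => [|n IH] c b; first by rewrite !big_ord0 ip0l.
by rewrite !big_ord_recr /= ipDl ipZl IH.
Qed.

Lemma ipvv_ge0 v : 0 <= ip v v.
Proof. by have [->|/(ip_pos hV)/ltW] := eqVneq v 0; rewrite ?ip0l. Qed.

Lemma ipvv_eq0 v : ip v v = 0 -> v = 0.
Proof. by move=> h; have [//|/(ip_pos hV)] := eqVneq v 0; rewrite h ltxx. Qed.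

Lemma ipnorm_eq0 v : ipnorm ip v <= 0 -> v = 0.
Proof.
move=> h; apply: ipvv_eq0; apply/eqP.
by rewrite eq_le ipvv_ge0 andbT -sqrtr_eq0 eq_le h sqrtr_ge0.
Qed.

Lemma ipnorm_le_addr a c : ip a c = 0 -> ipnorm ip a <= ipnorm ip (a + c).
Proof.
move=> hac; rewrite /ipnorm ler_sqrt ?ipvv_ge0 //.
by rewrite ipDl !ipDr (ip_sym hV c a) hac addr0 add0r lerDl ipvv_ge0.
Qed.

Lemma dist_le_ipnorm v S s : S s -> dist ip v S <= ipnorm ip (v - s).
Proof. by move=> Ss; apply: ge_inf; [exists 0 => _ [x _ <-]; apply: sqrtr_ge0 | exists s]. Qed.

Lemma dist_mem_le0 v S : S v -> dist ip v S <= 0.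
Proof.
by move=> Sv; apply: le_trans (dist_le_ipnorm v Sv) _; rewrite subrr /ipnorm ip0l sqrtr0.
Qed.

Lemma le_dist v S r : S !=set0 -> (forall s, S s -> r <= ipnorm ip (v - s)) ->
  r <= dist ip v S.
Proof.
move=> [s Ss] h; apply: lb_le_inf; first by exists (ipnorm ip (v - s)), s.
by move=> _ [x Sx <-]; apply: h.
Qed.

Lemma dist_ge0 v S : S !=set0 -> 0 <= dist ip v S.
Proof. by move=> hS; apply: le_dist => // s _; apply: sqrtr_ge0. Qed.

Definition free n (b : 'I_n -> V) : Prop :=
  forall c : 'I_n -> R, \sum_(i < n) c i *: b i = 0 -> forall i, c i = 0.

Definition span n (b : 'I_n -> V) : set V :=
  [set v | exists c : 'I_n -> R, v = \sum_(i < n) c i *: b i].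

Section Span.
Variables (n : nat) (b : 'I_n -> V).

Lemma span_sum c : span b (\sum_(i < n) c i *: b i).
Proof. by exists c. Qed.

Lemma span0 : span b 0.
Proof. by exists (fun=> 0); rewrite big1 // => i _; rewrite scale0r. Qed.

Lemma span_basis i : span b (b i).
Proof.
exists (fun j => (j == i)%:R).
by rewrite (bigD1 i) //= eqxx scale1r big1 ?addr0 // => j /negbTE ->; rewrite scale0r.
Qed.

Lemma spanZ a u : span b u -> span b (a *: u).
Proof.
move=> [c ->]; exists (fun i => a * c i).
by rewrite scaler_sumr; apply: eq_bigr => i _; rewrite scalerA.
Qed.

Lemma spanD u v : span b u -> span b v -> span b (u + v).
Proof.
move=> [c ->] [d ->]; exists (fun i => c i + d i).
by rewrite -big_split; apply: eq_bigr => i _; rewrite scalerDl.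
Qed.

Lemma spanB u v : span b u -> span b v -> span b (u - v).
Proof. by move=> hu hv; rewrite -scaleN1r; apply: spanD => //; apply: spanZ. Qed.

Lemma orth_span x : (forall j, ip x (b j) = 0) -> orth ip (span b) x.
Proof.
move=> hx _ [c ->]; rewrite (ip_sym hV) ip_suml big1 // => j _.
by rewrite (ip_sym hV) hx mulr0.
Qed.

End Span.

Lemma orthB S x y : orth ip S x -> orth ip S y -> orth ip S (x - y).
Proof. by move=> hx hy w Sw; rewrite ipBl hx // hy // subrr. Qed.

Lemma orth_self_eq0 (S : set V) x : S x -> orth ip S x -> x = 0.
Proof. by move=> Sx /(_ x Sx); apply: ipvv_eq0. Qed.

Definition gram n (b : 'I_n -> V) : 'M[R]_n := \matrix_(i, j) ip (b i) (b j).

(* Coordinates of the orthogonal projection of [v] on [span b]: the solution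
   of the normal equations. *)
Definition coord n (b : 'I_n -> V) (v : V) : 'rV[R]_n :=
  \row_j ip v (b j) *m invmx (gram b).

Definition coord_comb n (b x : 'I_n -> V) (v : V) : V :=
  \sum_(i < n) coord b v 0 i *: x i.

Local Notation proj b := (coord_comb b b).

Definition coproj n (b : 'I_n -> V) (v : V) : V := v - proj b v.

Lemma coord_is_linear n (b : 'I_n -> V) : linear (coord b).
Proof.
move=> a u v; rewrite /coord; have -> : \row_j ip (a *: u + v) (b j) =
    a *: \row_j ip u (b j) + \row_j ip v (b j).
  by apply/rowP => j; rewrite !mxE (ip_linl hV).
by rewrite mulmxDl -scalemxAl.
Qed.

Lemma coord_comb_is_linear n (b x : 'I_n -> V) : linear (coord_comb b x).
Proof.
move=> a u v; rewrite /coord_comb coord_is_linear.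
rewrite (eq_bigr (fun i => a *: (coord b u 0 i *: x i) + coord b v 0 i *: x i)).
  by rewrite big_split scaler_sumr.
by move=> i _; rewrite !mxE scalerDl scalerA.
Qed.

HB.instance Definition _ n (b x : 'I_n -> V) :=
  GRing.isLinear.Build R V V *:%R (coord_comb b x) (coord_comb_is_linear b x).

Lemma coproj_is_linear n (b : 'I_n -> V) : linear (coproj b).
Proof. by move=> a u v; rewrite /coproj linearP scalerBr opprD addrACA. Qed.

HB.instance Definition _ n (b : 'I_n -> V) :=
  GRing.isLinear.Build R V V *:%R (coproj b) (coproj_is_linear b).

Lemma linear_comb (F : {linear V -> V}) n (c : 'I_n -> R) (b : 'I_n -> V) :
  F (\sum_(i < n) c i *: b i) = \sum_(i < n) c i *: F (b i).
Proof. by rewrite linear_sum; apply: eq_bigr => i _; rewrite linearZ. Qed.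

Lemma coord_comb_comp (F : {linear V -> V}) n (b x : 'I_n -> V) v :
  F (coord_comb b x v) = coord_comb b (fun i => F (x i)) v.
Proof. exact: linear_comb. Qed.

Section Projection.
Variables (n : nat) (b : 'I_n -> V).
Hypothesis hb : free b.

Lemma gram_unitmx : gram b \in unitmx.
Proof.
rewrite -row_free_unit; apply: inj_row_free => c hc.
have hcb : ip (\sum_(i < n) c 0 i *: b i) (\sum_(i < n) c 0 i *: b i) = 0.
  apply: orth_span (span_sum _ _) => j; rewrite ip_suml.
  move/rowP: hc => /(_ j); rewrite !mxE => hj; rewrite -[RHS]hj.
  by apply: eq_bigr => i _; rewrite mxE.
by apply/rowP => i; rewrite mxE (hb (ipvv_eq0 hcb)).
Qed.

Lemma coproj_orth v : orth ip (span b) (coproj b v).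
Proof.
apply: orth_span => j; rewrite ipBl ip_suml.
have -> : \sum_(i < n) coord b v 0 i * ip (b i) (b j) = (coord b v *m gram b) 0 j.
  by rewrite [RHS]mxE; apply: eq_bigr => i _; rewrite [gram b _ _]mxE.
by rewrite mulmxKV ?gram_unitmx // mxE subrr.
Qed.

Lemma coproj_min v s : span b s -> ipnorm ip (coproj b v) <= ipnorm ip (v - s).
Proof.
move=> hs; have -> : v - s = coproj b v + (proj b v - s) by rewrite addrA subrK.
by apply: ipnorm_le_addr; apply: coproj_orth; apply: spanB => //; apply: span_sum.
Qed.

(* Finite-dimensional subspaces are closed: the distance is attained at the projection. *)
Lemma dist_translate_span_le0 u v :
  dist ip v (translate u (span b)) <= 0 -> translate u (span b) v.
Proof.
move=> hd; exists (proj b (v - u)); first exact: span_sum.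
apply/esym/eqP; rewrite addrC -subr_eq -subr_eq0 -/(coproj b (v - u)).
apply/eqP/ipnorm_eq0; apply: le_trans hd; apply: le_dist.
  by exists (u + 0), 0; [apply: span0|].
by move=> _ [s hs <-]; rewrite opprD addrA; apply: coproj_min.
Qed.

End Projection.

Lemma affine_combD (t : R) (p q r : V) :
  t *: p + (1 - t) *: q + r = t *: (p + r) + (1 - t) *: (q + r).
Proof. by rewrite !scalerDr addrACA -scalerDl [t + _]addrC subrK scale1r. Qed.

Lemma affine_on_linear_shift (F G : {linear V -> V}) (K C : V) (S : set V) :
  affine_on S (fun x => F (K + G (x - C))).
Proof.
move=> t x y _ _ /=; rewrite (affine_combD t x y (- C)) linearP linearZ.
by rewrite [K + _]addrC (affine_combD t _ _ K) linearP linearZ ![_ + K]addrC.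
Qed.

Section AffineOnSpan.
Variables (n : nat) (b : 'I_n -> V) (B : V -> V).
Hypothesis hB : affine_on (span b) B.

Lemma affine_on_spanZ a x : span b x -> B (a *: x) - B 0 = a *: (B x - B 0).
Proof.
move=> hx; have := hB a hx (span0 b); rewrite scaler0 addr0 => ->.
by rewrite scalerBl scale1r scalerBr addrA addrAC addrK.
Qed.

(* [x + y] is the midpoint of [2 x] and [2 y]. *)
Lemma affine_on_spanD x y : span b x -> span b y ->
  B (x + y) - B 0 = (B x - B 0) + (B y - B 0).
Proof.
move=> hx hy; have h2 : (2 : R) != 0 by rewrite pnatr_eq0.
have e1 : 1 - (2 : R)^-1 = 2^-1.
  by apply: (mulIf h2); rewrite mulrBl mulVf // mul1r [2 in LHS]/(1 + 1) addrK.
have -> : x + y = 2^-1 *: (2 *: x) + (1 - 2^-1) *: (2 *: y).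
  by rewrite e1 !scalerA mulVf // !scale1r.
rewrite hB; [|exact: spanZ|exact: spanZ].
rewrite affine_combD !affine_on_spanZ // e1 !scalerA mulVf //.
by rewrite !scale1r.
Qed.

Lemma affine_on_span_sum (c : 'I_n -> R) :
  B (\sum_(i < n) c i *: b i) = B 0 + \sum_(i < n) c i *: (B (b i) - B 0).
Proof.
apply/eqP; rewrite addrC -subr_eq; apply/eqP.
apply: (proj2 (big_ind2 (fun x y => span b x /\ B x - B 0 = y) _ _ _)).
- by split; [apply: span0 | rewrite subrr].
- move=> x1 x2 y1 y2 [h1 <-] [h2 <-].
  by split; [apply: spanD | apply: affine_on_spanD].
- move=> i _; split; first by apply/spanZ/span_basis.
  by apply: affine_on_spanZ; apply: span_basis.
Qed.

End AffineOnSpan.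

Section GraphOfAffineCorrection.
Variables (m : nat) (b : 'I_m -> V) (B : V -> V).
Hypotheses (hb : free b) (hBa : affine_on (span b) B)
  (hBo : forall w, span b w -> orth ip (span b) (B w)).

(* A basis of the direction of the affine graph [{w + B w | w in span b}]. *)
Definition graph_basis (i : 'I_m) : V := b i + (B (b i) - B 0).

Lemma graph_comb c :
  \sum_(i < m) c i *: b i + B (\sum_(i < m) c i *: b i) =
  B 0 + \sum_(i < m) c i *: graph_basis i.
Proof.
rewrite affine_on_span_sum // addrCA; congr (_ + _).
by rewrite /graph_basis [in RHS](eq_bigr _ (fun i _ => scalerDr _ _ _)) big_split.
Qed.

Lemma orth_graph_shift w : span b w -> orth ip (span b) (B w - B 0).
Proof. by move=> hw; apply: orthB; apply: hBo => //; apply: span0. Qed.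

Lemma graph_dir_eq0 c : B 0 + \sum_(i < m) c i *: graph_basis i = B 0 ->
  \sum_(i < m) c i *: b i = 0.
Proof.
rewrite -graph_comb => hw; apply: (orth_self_eq0 (span_sum b c)).
rewrite {1}(_ : \sum_(i < m) _ = B 0 - B (\sum_(i < m) c i *: b i)); last by rewrite -hw addrK.
by apply: orthB; apply: hBo; [apply: span0 | apply: span_sum].
Qed.

Lemma graph_basis_free : free graph_basis.
Proof. by move=> c hc; apply: hb; apply: graph_dir_eq0; rewrite hc addr0. Qed.

Lemma graph_cap_orth : span graph_basis `&` orth ip (span b) = [set 0].
Proof.
apply/seteqP; split => [x [[c ->] hx]|_ ->]; last first.
  by split; [apply: span0 | move=> y _; apply: ip0l].
have hw := span_sum b c; set w := \sum_(i < m) c i *: b i in hw.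
have gx : \sum_(i < m) c i *: graph_basis i = w + (B w - B 0).
  by rewrite addrA graph_comb addrAC subrr add0r.
have w0 : w = 0.
  apply: (orth_self_eq0 hw); have -> : w = \sum_(i < m) c i *: graph_basis i - (B w - B 0).
    by rewrite gx addrK.
  by apply: orthB => //; apply: orth_graph_shift.
by rewrite /= gx w0 subrr addr0.
Qed.

Lemma graph_argmin w : span b w ->
  is_argmin (fun v => dist ip v (translate (B 0) (span graph_basis)))
    (translate w (orth ip (span b))) (w + B w).
Proof.
move=> hw; set T := translate (B 0) (span graph_basis).
have hT : T !=set0 by exists (B 0 + 0), 0; [apply: span0|].
have [c hwc] := hw.
have hwT : T (w + B w).
  by rewrite hwc graph_comb; exists (\sum_(i < m) c i *: graph_basis i); [apply: span_sum|].
split; first by exists (B w); [apply: hBo|].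
split=> [v _|y [p hp <-] hmin]; first by apply: le_trans (dist_mem_le0 hwT) (dist_ge0 _ hT).
have hyT : T (w + p).
  apply: dist_translate_span_le0 graph_basis_free _ _ _.
  by apply: le_trans (hmin _ _) (dist_mem_le0 hwT); exists (B w); [apply: hBo|].
have [_ [d ->]] := hyT; rewrite -graph_comb => hy.
have hw' := span_sum b d; set w' := \sum_(i < m) d i *: b i in hy hw'.
have ww : w = w'.
  apply/subr0_eq/(orth_self_eq0 (spanB hw hw')).
  rewrite (_ : w - w' = B w' - p); first by apply: orthB => //; apply: hBo.
  by rewrite -(addrK p w) -hy addrAC [w' + _]addrC addrK.
by rewrite -hy -ww.
Qed.

Lemma pbdw_of_affine_correction (A : V -> V) :
  (forall w, span b w -> A w = w + B w) ->
  exists (ubar : V) (Vn : set V) (n : nat),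
    (n <= m)%N /\ subspace_of_dim Vn n /\ Vn `&` orth ip (span b) = [set 0] /\
    (forall w, span b w ->
       is_argmin (fun v => dist ip v (translate ubar Vn))
         (translate w (orth ip (span b))) (A w)).
Proof.
move=> hA; exists (B 0), (span graph_basis), m.
split=> //; split; first by exists graph_basis; split=> //; apply: graph_basis_free.
split; first exact: graph_cap_orth.
by move=> w hw; rewrite hA //; apply: graph_argmin.
Qed.

End GraphOfAffineCorrection.

Section PBDWCorrection.
Variables (m n : nat) (b : 'I_m -> V) (e : 'I_n -> V) (ubar : V).
Hypotheses (hb : free b) (he : free e)
  (hcap : span e `&` orth ip (span b) = [set 0]).

Lemma proj_basis_free : free (fun i => proj b (e i)).
Proof.
move=> c hc; apply: he; set s := \sum_(i < n) c i *: e i.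
have hs : proj b s = 0 by rewrite -hc; apply: linear_comb.
have : (span e `&` orth ip (span b)) s.
  by split; [apply: span_sum | rewrite -[s]subr0 -hs; apply: coproj_orth].
by rewrite hcap.
Qed.

(* [coord_comb (proj b \o e) e] lifts a vector to the element of [span e] whose
   projection on [span b] best approximates it. *)
Definition pbdw_correction (w : V) : V :=
  coproj b (ubar + coord_comb (fun i => proj b (e i)) e (w - proj b ubar)).

Lemma pbdw_correction_orth w : orth ip (span b) (pbdw_correction w).
Proof. exact: coproj_orth. Qed.

Lemma pbdw_correction_affine : affine_on (span b) pbdw_correction.
Proof. exact: affine_on_linear_shift. Qed.

Lemma pbdw_correction_min w v : span b w -> translate w (orth ip (span b)) v ->
  dist ip (w + pbdw_correction w) (translate ubar (span e)) <=
  dist ip v (translate ubar (span e)).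
Proof.
move=> hw [p hp <-]; set z := fun i => proj b (e i).
set u0 := w - proj b ubar; set S := coord_comb z e.
apply: le_trans (_ : ipnorm ip (coproj z u0) <= _).
  apply: le_trans (dist_le_ipnorm _ (_ : translate ubar (span e) (ubar + S u0))) _.
    by exists (S u0) => //; apply: span_sum.
  have -> : w + pbdw_correction w - (ubar + S u0) = coproj z u0.
    rewrite /pbdw_correction -/z -/S -/u0 /coproj linearD /=.
    rewrite [proj b (S u0)](coord_comb_comp (coord_comb b b)) -/z.
    by rewrite addrCA addrAC subrr add0r opprD addrA.
  by [].
apply: le_dist; first by exists (ubar + 0), 0; [apply: span0|].
move=> _ [_ [d ->] <-]; set s := \sum_(i < n) d i *: e i.
apply: le_trans (_ : ipnorm ip (u0 - proj b s) <= _).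
  by apply: (coproj_min proj_basis_free); rewrite /s linear_comb; apply: span_sum.
have -> : w + p - (ubar + s) = (u0 - proj b s) + (p - coproj b (ubar + s)).
  rewrite /coproj [proj b (ubar + s)]linearD /= opprB /u0.
  by rewrite -[w - _ - proj b s]addrA -opprD addrACA addKr.
apply: ipnorm_le_addr; rewrite (ip_sym hV); apply: (orthB hp (coproj_orth hb _)).
by apply: spanB; [apply: spanB => // | ]; apply: span_sum.
Qed.

Lemma affine_correction_of_pbdw (A : V -> V) :
  (forall w, span b w ->
     is_argmin (fun v => dist ip v (translate ubar (span e)))
       (translate w (orth ip (span b))) (A w)) ->
  exists B : V -> V,
    (forall w, span b w -> orth ip (span b) (B w)) /\ affine_on (span b) B /\
    (forall w, span b w -> A w = w + B w).
Proof.
move=> hA; exists pbdw_correction; split=> [w _|]; first exact: pbdw_correction_orth.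
split=> [|w hw]; first exact: pbdw_correction_affine.
have [_ [_ uniq]] := hA w hw; apply/esym/uniq => [|v hv]; last exact: pbdw_correction_min.
by exists (pbdw_correction w) => //; apply: pbdw_correction_orth.
Qed.

End PBDWCorrection.

End InnerProduct.

Theorem mainTheorem1 (R : realType) (V : lmodType R) (ip : V -> V -> R)
  (hV : is_hilbert ip) (W : set V) (m : nat) (hW : subspace_of_dim W m)
  (A : V -> V) :
  (exists B : V -> V,
      (forall w, W w -> orth ip W (B w)) /\ affine_on W B /\
      (forall w, W w -> A w = w + B w))
  <->
  (exists (ubar : V) (Vn : set V) (n : nat),
      (n <= m)%N /\ subspace_of_dim Vn n /\ Vn `&` orth ip W = [set 0] /\
      (forall w, W w ->
         is_argmin (fun v => dist ip v (translate ubar Vn))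
                   (translate w (orth ip W)) (A w))).
Proof.
have [b [hb ->]] := hW; split.
- by move=> [B [hBo [hBa hA]]]; apply: (pbdw_of_affine_correction hV hb hBa hBo hA).
- move=> [ubar [_ [n [_ [[e [he ->]] [hcap hA]]]]]].
  exact: (affine_correction_of_pbdw hV hb he hcap hA).
Qed.
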